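(* Let $L_{\max}\ge 2$ be an integer and let $\mu_1,\dots,\mu_{L_{\max}}$ be real constants satisfying $\mu_t\ge \mu_{\min}$ for all $t\in\{1,\dots,L_{\max}\}$, for some $\mu_{\min}>0$. For $\theta\in\mathbb{R}$ let $p=\sigma(\theta)$, where $\sigma(x)=1/(1+e^{-x})$, and define $$J(\theta)=\sum_{t=1}^{L_{\max}}\mu_t\,(1-\sigma(\theta))^{t-1}.$$ Let $\theta(s)$, $s\ge 0$, be the solution of the gradient-flow ODE $\frac{d\theta(s)}{ds}=J'(\theta(s))$, $\theta(0)=\theta_0\in\mathbb{R}$, and set $p(s)=\sigma(\theta(s))$. Then: (1) $p(s)$ is strictly decreasing in $s$ and $p(s)\to 0$ as $s\to\infty$; (2) there exist constants $S,K>0$ such that $p(s)\le K/s$ for all $s\ge S$. Consequently, the expected path length $\mathbb{E}[\tau]=\sum_{t=1}^{L_{\max}}(1-p(s))^{t-1}$ converges to $L_{\max}$ as $s\to\infty$.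
   Context: Stylized model of a path-generating policy that only makes continue/stop decisions: at each step $t\in\{1,\dots,L_{\max}\}$ the policy stops with the position-independent probability $p=\sigma(\theta)$, and $\tau\le L_{\max}$ denotes the stopping time (path length), so $\mathbb{P}(\tau\ge t)=(1-p)^{t-1}$. The total return is $G=\sum_{t=1}^{\tau}r_t$ with step rewards $r_t$, and $\mu_t:=\mathbb{E}[r_t\mid \tau\ge t]$ is assumed not to depend on $\theta$; then $J(\theta)=\mathbb{E}[G]=\sum_{t=1}^{L_{\max}}\mu_t(1-p)^{t-1}$, which is the function defined in the claim. The hypothesis $\mu_t\ge\mu_{\min}>0$ expresses that the expected step-level reward is positive at every step. *)

From Stdlib Require Import Reals.
From Coquelicot Require Import Coquelicot.
Open Scope R_scope.

Definition logistic (x : R) : R := 1 / (1 + exp (- x)).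

(* J(theta) = sum_{t=1}^{Lmax} mu_t (1 - logistic theta)^(t-1);
   Stdlib's [sum_f 1 Lmax f] is f 1 + ... + f Lmax. *)
Definition J (Lmax : nat) (mu : nat -> R) (theta : R) : R :=
  sum_f 1 Lmax (fun t => mu t * (1 - logistic theta) ^ (t - 1)).

Definition expected_length (Lmax : nat) (p : R) : R :=
  sum_f 1 Lmax (fun t => (1 - p) ^ (t - 1)).

(** Along the flow, [J'(theta) <= - mu_min p (1 - p) < 0] because the [t = 2]
    term of [J'] already contributes [- mu_2 p (1 - p)]; hence [theta], and with
    it [p = logistic theta], decreases strictly.  For the rate, take the
    Lyapunov function [u = exp (- theta) = (1 - p) / p]: its derivative is
    [- J'(theta) u >= mu_min (1 - p)^2], which is bounded below by a positive
    constant once [p] has dropped below its value at time [1].  So [u] grows at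
    least linearly and [p <= 1 / u = O(1/s)].  The expected length is a
    polynomial in [p] equal to [Lmax] at [p = 0]. *)

From Stdlib Require Import Reals Lra Lia.
From Coquelicot Require Import Coquelicot.
Open Scope R_scope.

Lemma logistic_bounds x : 0 < logistic x < 1.
Proof.
  unfold logistic. pose proof (exp_pos (- x)).
  split.
  - apply Rdiv_lt_0_compat; lra.
  - apply Rmult_lt_reg_r with (1 + exp (- x)); [lra|]. field_simplify; lra.
Qed.

Lemma logistic_lt x y : x < y -> logistic x < logistic y.
Proof.
  intros Hxy. unfold logistic, Rdiv. rewrite !Rmult_1_l.
  assert (exp (- y) < exp (- x)) by (apply exp_increasing; lra).
  pose proof (exp_pos (- y)).
  apply Rinv_lt_contravar; nra.
Qed.

Lemma exp_neg_mul_logistic x : exp (- x) * logistic x = 1 - logistic x.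
Proof. unfold logistic. pose proof (exp_pos (- x)). field. lra. Qed.

Lemma logistic_le_inv_exp_neg x : logistic x <= / exp (- x).
Proof.
  unfold logistic, Rdiv. rewrite Rmult_1_l. pose proof (exp_pos (- x)).
  apply Rinv_le_contravar; lra.
Qed.

Lemma is_derive_logistic x : is_derive logistic x (logistic x * (1 - logistic x)).
Proof.
  unfold logistic. pose proof (exp_pos (- x)).
  auto_derive; [lra|]. field. lra.
Qed.

Lemma is_derive_pow_one_minus_logistic (k : nat) x :
  is_derive (fun y => (1 - logistic y) ^ k) x
    (- INR k * logistic x * (1 - logistic x) ^ k).
Proof.
  replace (- INR k * logistic x * (1 - logistic x) ^ k)
    with (INR k * (0 - logistic x * (1 - logistic x)) * (1 - logistic x) ^ Nat.pred k)
    by (destruct k; simpl; ring).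
  apply (is_derive_pow (fun y => 1 - logistic y)).
  exact (is_derive_minus (fun _ => 1) logistic x _ _
           (is_derive_const 1 x) (is_derive_logistic x)).
Qed.

Lemma is_derive_sum_f_R0 (F dF : nat -> R -> R) x n :
  (forall k, (k <= n)%nat -> is_derive (F k) x (dF k x)) ->
  is_derive (fun y => sum_f_R0 (fun k => F k y) n) x (sum_f_R0 (fun k => dF k x) n).
Proof.
  induction n as [|n IH]; intros HF; simpl.
  - apply HF. lia.
  - exact (is_derive_plus _ _ _ _ _ (IH (fun k Hk => HF k ltac:(lia))) (HF (S n) ltac:(lia))).
Qed.

Lemma continuous_sum_f_R0 (F : nat -> R -> R) x n :
  (forall k, (k <= n)%nat -> continuous (F k) x) ->
  continuous (fun y => sum_f_R0 (fun k => F k y) n) x.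
Proof.
  induction n as [|n IH]; intros HF; simpl.
  - apply HF. lia.
  - apply (continuous_plus (fun y => sum_f_R0 (fun k => F k y) n) (F (S n))).
    + apply IH. intros; apply HF; lia.
    + apply HF. lia.
Qed.

Lemma sum_f_R0_ge_term (a : nat -> R) n i :
  (forall k, (k <= n)%nat -> 0 <= a k) -> (i <= n)%nat -> a i <= sum_f_R0 a n.
Proof.
  revert i. induction n as [|n IH]; intros i Ha Hi; simpl.
  - replace i with 0%nat by lia. lra.
  - assert (0 <= a (S n)) by (apply Ha; lia).
    destruct (Nat.eq_dec i (S n)) as [->|Hne].
    + assert (a 0%nat <= sum_f_R0 a n) by (apply IH; [intros; apply Ha|]; lia).
      assert (0 <= a 0%nat) by (apply Ha; lia).
      lra.
    + assert (a i <= sum_f_R0 a n) by (apply IH; [intros; apply Ha|]; lia).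
      lra.
Qed.

Lemma J_eq Lmax mu th :
  J Lmax mu th = sum_f_R0 (fun k => mu (k + 1)%nat * (1 - logistic th) ^ k) (Lmax - 1).
Proof. apply sum_eq. intros k _. now rewrite Nat.add_sub. Qed.

Lemma is_derive_J Lmax mu th :
  is_derive (J Lmax mu) th
    (- logistic th * sum_f_R0 (fun k => mu (k + 1)%nat * INR k * (1 - logistic th) ^ k) (Lmax - 1)).
Proof.
  apply is_derive_ext with
    (fun y => sum_f_R0 (fun k => mu (k + 1)%nat * (1 - logistic y) ^ k) (Lmax - 1)).
  { intros y. symmetry. apply J_eq. }
  rewrite scal_sum.
  apply (is_derive_sum_f_R0 (fun k y => mu (k + 1)%nat * (1 - logistic y) ^ k)
           (fun k y => mu (k + 1)%nat * INR k * (1 - logistic y) ^ k * - logistic y)).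
  intros k _.
  replace (mu (k + 1)%nat * INR k * (1 - logistic th) ^ k * - logistic th)
    with (mu (k + 1)%nat * (- INR k * logistic th * (1 - logistic th) ^ k)) by ring.
  apply is_derive_scal, is_derive_pow_one_minus_logistic.
Qed.

Lemma Derive_J_le Lmax mu mu_min th :
  (2 <= Lmax)%nat -> 0 <= mu_min ->
  (forall t, (1 <= t <= Lmax)%nat -> mu_min <= mu t) ->
  Derive (J Lmax mu) th <= - mu_min * logistic th * (1 - logistic th).
Proof.
  intros HL Hmin Hmu.
  rewrite (is_derive_unique _ _ _ (is_derive_J Lmax mu th)).
  pose proof (logistic_bounds th) as Hp.
  set (a k := mu (k + 1)%nat * INR k * (1 - logistic th) ^ k).
  assert (Hsum : a 1%nat <= sum_f_R0 a (Lmax - 1)).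
  { apply sum_f_R0_ge_term; [|lia]. intros k Hk. unfold a.
    assert (mu_min <= mu (k + 1)%nat) by (apply Hmu; lia).
    pose proof (pos_INR k). pose proof (pow_le (1 - logistic th) k ltac:(lra)).
    apply Rmult_le_pos; [apply Rmult_le_pos|]; lra. }
  assert (Ha1 : mu_min * (1 - logistic th) <= a 1%nat).
  { unfold a. simpl. assert (mu_min <= mu 2%nat) by (apply Hmu; lia). nra. }
  nra.
Qed.

Lemma continuous_expected_length Lmax p : continuous (expected_length Lmax) p.
Proof.
  apply (continuous_sum_f_R0 (fun k q => (1 - q) ^ (k + 1 - 1))).
  intros k _. apply (ex_derive_continuous (K := R_AbsRing) (V := R_NormedModule)).
  auto_derive. exact I.
Qed.

Lemma expected_length_0 Lmax : (1 <= Lmax)%nat -> expected_length Lmax 0 = INR Lmax.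
Proof.
  intros HL. unfold expected_length, sum_f.
  rewrite (sum_eq _ (fun _ => 1)) by (intros; rewrite Rminus_0_r; apply pow1).
  rewrite sum_cte, Rmult_1_l. f_equal. lia.
Qed.

Lemma is_derive_neg_decreasing (f df : R -> R) a b :
  a < b -> (forall x, a <= x <= b -> is_derive f x (df x)) ->
  (forall x, a <= x <= b -> df x < 0) -> f b < f a.
Proof.
  intros Hab Hf Hdf.
  destruct (MVT_cor2 f df a b Hab) as [c [Hc1 Hc2]].
  { intros c Hc. apply is_derive_Reals, Hf, Hc. }
  assert (df c < 0) by (apply Hdf; lra). nra.
Qed.

Lemma is_derive_ge_linear_growth (f df : R -> R) c a b :
  a <= b -> (forall x, a <= x <= b -> is_derive f x (df x)) ->
  (forall x, a <= x <= b -> c <= df x) -> f a + c * (b - a) <= f b.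
Proof.
  intros [Hab|<-] Hf Hdf; [|lra].
  destruct (MVT_cor2 f df a b Hab) as [d [Hd1 Hd2]].
  { intros d Hd. apply is_derive_Reals, Hf, Hd. }
  assert (c <= df d) by (apply Hdf; lra). nra.
Qed.

Lemma le_right_lim_of_nonincreasing (f : R -> R) a l :
  (forall x y, a < x -> x < y -> f y <= f x) ->
  filterlim f (at_right a) (locally l) -> forall b, a < b -> f b <= l.
Proof.
  intros Hf Hlim b Hab.
  apply (closed_filterlim_loc f (fun u => f b <= u) l Hlim); [|apply closed_ge].
  exists (mkposreal (b - a) ltac:(lra)). intros y Hy Hay.
  change (Rabs (y - a) < b - a) in Hy. apply Rabs_lt_between' in Hy.
  apply Hf; lra.
Qed.

Lemma is_lim_0_of_le_inv (f : R -> R) S K :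
  (forall s, S <= s -> 0 <= f s <= K / s) -> is_lim f p_infty 0.
Proof.
  intros Hf.
  apply (is_lim_le_le_loc (fun _ => 0) (fun s => K * / s)).
  - exists S. intros s Hs. apply Hf. lra.
  - apply is_lim_const.
  - replace (Finite 0) with (Rbar_mult K (Rbar_inv p_infty)) by (simpl; f_equal; ring).
    apply is_lim_scal_l, is_lim_inv; [apply is_lim_id | discriminate].
Qed.

Section GradientFlow.

Variables (Lmax : nat) (mu : nat -> R) (mu_min theta0 : R) (theta : R -> R).
Hypothesis HLmax : (2 <= Lmax)%nat.
Hypothesis Hmu_min : 0 < mu_min.
Hypothesis Hmu : forall t, (1 <= t <= Lmax)%nat -> mu_min <= mu t.
Hypothesis Hflow : forall s, 0 < s -> is_derive theta s (Derive (J Lmax mu) (theta s)).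
Hypothesis Hright : filterlim theta (at_right 0) (locally theta0).

Lemma Derive_J_lt0 th : Derive (J Lmax mu) th < 0.
Proof.
  pose proof (Derive_J_le Lmax mu mu_min th HLmax (Rlt_le _ _ Hmu_min) Hmu).
  pose proof (logistic_bounds th).
  assert (0 < mu_min * logistic th * (1 - logistic th))
    by (apply Rmult_lt_0_compat; [apply Rmult_lt_0_compat|]; lra).
  lra.
Qed.

Lemma theta_decreasing a b : 0 < a -> a < b -> theta b < theta a.
Proof.
  intros Ha Hab.
  apply (is_derive_neg_decreasing theta (fun s => Derive (J Lmax mu) (theta s)) a b Hab).
  - intros x Hx. apply Hflow. lra.
  - intros x _. apply Derive_J_lt0.
Qed.

Lemma theta_lt_init b : 0 < b -> theta b < theta0.
Proof.
  intros Hb.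
  assert (theta (b / 2) <= theta0).
  { apply (le_right_lim_of_nonincreasing theta 0); [|exact Hright|lra].
    intros x y Hx Hxy. left. now apply theta_decreasing. }
  assert (theta b < theta (b / 2)) by (apply theta_decreasing; lra).
  lra.
Qed.

Lemma exp_neg_theta_growth s :
  1 <= s -> mu_min * (1 - logistic (theta 1)) ^ 2 * (s - 1) <= exp (- theta s).
Proof.
  intros Hs. pose proof (exp_pos (- theta 1)).
  enough (exp (- theta 1) + mu_min * (1 - logistic (theta 1)) ^ 2 * (s - 1)
          <= exp (- theta s)) by lra.
  apply (is_derive_ge_linear_growth (fun x => exp (- theta x))
           (fun x => - Derive (J Lmax mu) (theta x) * exp (- theta x))); [exact Hs| |].
  - intros x Hx.
    replace (- Derive (J Lmax mu) (theta x) * exp (- theta x))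
      with (scal (Derive (J Lmax mu) (theta x)) (- exp (- theta x)))
      by (unfold scal; simpl; unfold mult; simpl; ring).
    apply (is_derive_comp (fun y => exp (- y)) theta).
    + auto_derive; [exact I | ring].
    + apply Hflow. lra.
  - intros x Hx.
    set (th := theta x).
    pose proof (Derive_J_le Lmax mu mu_min th HLmax (Rlt_le _ _ Hmu_min) Hmu).
    pose proof (logistic_bounds th). pose proof (logistic_bounds (theta 1)).
    pose proof (exp_pos (- th)).
    assert (Hcoef : mu_min * (1 - logistic th) ^ 2
                    <= - Derive (J Lmax mu) th * exp (- th)).
    { replace (mu_min * (1 - logistic th) ^ 2)
        with (mu_min * logistic th * (1 - logistic th) * exp (- th))
        by (rewrite <- (exp_neg_mul_logistic th); ring).
      apply Rmult_le_compat_r; lra. }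
    assert (Hp : logistic th <= logistic (theta 1)).
    { destruct Hx as [[Hx|<-] _]; [|right; reflexivity].
      left. apply logistic_lt, theta_decreasing; lra. }
    assert ((1 - logistic (theta 1)) ^ 2 <= (1 - logistic th) ^ 2) by (simpl; nra).
    nra.
Qed.

Lemma logistic_theta_rate :
  exists S K, 0 < S /\ 0 < K /\ forall s, S <= s -> logistic (theta s) <= K / s.
Proof.
  set (c := mu_min * (1 - logistic (theta 1)) ^ 2).
  assert (Hc : 0 < c).
  { pose proof (logistic_bounds (theta 1)).
    apply Rmult_lt_0_compat; [lra | apply pow_lt; lra]. }
  exists 2, (2 / c). repeat split; [lra | apply Rdiv_lt_0_compat; lra |].
  intros s Hs.
  assert (Hu : c * s / 2 <= exp (- theta s)).
  { pose proof (exp_neg_theta_growth s ltac:(lra)) as Hgrowth. fold c in Hgrowth. nra. }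
  eapply Rle_trans; [apply logistic_le_inv_exp_neg|].
  replace (2 / c / s) with (/ (c * s / 2)) by (field; lra).
  apply Rinv_le_contravar; nra.
Qed.

End GradientFlow.

Theorem theoremA1 (Lmax : nat) (mu : nat -> R) (mu_min theta0 : R)
  (theta : R -> R) :
  (2 <= Lmax)%nat ->
  0 < mu_min ->
  (forall t, (1 <= t <= Lmax)%nat -> mu_min <= mu t) ->
  theta 0 = theta0 ->
  (forall s, 0 < s -> is_derive theta s (Derive (J Lmax mu) (theta s))) ->
  filterlim theta (at_right 0) (locally theta0) ->
  ((forall s1 s2, 0 <= s1 -> s1 < s2 -> logistic (theta s2) < logistic (theta s1)) /\
   is_lim (fun s => logistic (theta s)) p_infty 0) /\
  (exists S K, 0 < S /\ 0 < K /\
     forall s, S <= s -> logistic (theta s) <= K / s) /\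
  is_lim (fun s => expected_length Lmax (logistic (theta s))) p_infty (INR Lmax).
Proof.
  intros HL Hmin Hmu H0 Hflow Hright.
  destruct (logistic_theta_rate Lmax mu mu_min theta HL Hmin Hmu Hflow)
    as (S & K & HS & HK & Hrate).
  assert (Hlim : is_lim (fun s => logistic (theta s)) p_infty 0).
  { apply (is_lim_0_of_le_inv _ S K). intros s Hs.
    split; [left; apply logistic_bounds | now apply Hrate]. }
  split; [split|split].
  - intros s1 s2 [Hs1|<-] Hs12; apply logistic_lt.
    + now apply (theta_decreasing Lmax mu mu_min).
    + rewrite H0. now apply (theta_lt_init Lmax mu mu_min theta0).
  - exact Hlim.
  - now exists S, K.
  - rewrite <- expected_length_0 by lia.
    apply (filterlim_comp _ _ _ (fun s => logistic (theta s)) (expected_length Lmax)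
             (Rbar_locally p_infty) (locally 0)).
    + exact Hlim.
    + apply continuous_expected_length.
Qed.
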